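(* The reduction relation $\Rightarrow$ of Combinatory ReFLect (CR) is not strongly normalizing: there exists a well-typed CR term that has an infinite reduction sequence.
   Context: Combinatory ReFLect (CR) is defined as follows. Types: $\sigma ::= \mathsf{bool} \mid \mathsf{unit} \mid \mathsf{term} \mid \sigma_1 \to \sigma_2$. Terms: $e ::= \mathsf{I}_\sigma \mid \mathsf{K}_{\sigma,\tau} \mid \mathsf{S}_{\sigma,\tau,\upsilon} \mid \mathsf{value}_\sigma \mid \mathsf{lift} \mid \mathsf{app} \mid e_1\,e_2 \mid \ulcorner e\urcorner$, where $\sigma,\tau,\upsilon$ range over types and $\ulcorner e\urcorner$ is the quotation of $e$. Typing rules: $\mathsf{I}_\sigma:\sigma\to\sigma$; $\mathsf{K}_{\sigma,\tau}:\sigma\to\tau\to\sigma$; $\mathsf{S}_{\sigma,\tau,\upsilon}:(\sigma\to\tau\to\upsilon)\to(\sigma\to\tau)\to\sigma\to\upsilon$; $\mathsf{value}_\sigma:\mathsf{term}\to\sigma$; $\mathsf{lift}:\mathsf{term}\to\mathsf{term}$; $\mathsf{app}:\mathsf{term}\to\mathsf{term}\to\mathsf{term}$; if $e_1:\sigma\to\tau$ and $e_2:\sigma$ then $e_1\,e_2:\tau$; if $e:\sigma$ then $\ulcorner e\urcorner:\mathsf{term}$. The reduction relation $\Rightarrow$ is the reflexive, transitive, congruence closure of: $\mathsf{I}_\sigma\,e\Rightarrow e$; $\mathsf{K}_{\sigma,\tau}\,e_1\,e_2\Rightarrow e_1$; $\mathsf{S}_{\sigma,\tau,\upsilon}\,e_1\,e_2\,e_3\Rightarrow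 e_1\,e_3\,(e_2\,e_3)$; if $e:\sigma$ then $\mathsf{value}_\sigma\,\ulcorner e\urcorner\Rightarrow e$; $\mathsf{lift}\,\ulcorner s\urcorner\Rightarrow\ulcorner\ulcorner s\urcorner\urcorner$; if $e_1\,e_2$ is well typed then $\mathsf{app}\,\ulcorner e_1\urcorner\,\ulcorner e_2\urcorner\Rightarrow\ulcorner e_1\,e_2\urcorner$. (Application associates to the left.) *)

Inductive ty : Type :=
| Tbool : ty
| Tunit : ty
| Tterm : ty
| Tarr : ty -> ty -> ty.

Inductive tm : Type :=
| I_ : ty -> tm
| K_ : ty -> ty -> tm
| S_ : ty -> ty -> ty -> tm
| value_ : ty -> tm
| lift : tm
| app : tm
| App : tm -> tm -> tm
| Quote : tm -> tm.

Inductive has_type : tm -> ty -> Prop :=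
| T_I : forall s, has_type (I_ s) (Tarr s s)
| T_K : forall s t, has_type (K_ s t) (Tarr s (Tarr t s))
| T_S : forall s t u,
    has_type (S_ s t u)
      (Tarr (Tarr s (Tarr t u)) (Tarr (Tarr s t) (Tarr s u)))
| T_value : forall s, has_type (value_ s) (Tarr Tterm s)
| T_lift : has_type lift (Tarr Tterm Tterm)
| T_app : has_type app (Tarr Tterm (Tarr Tterm Tterm))
| T_App : forall e1 e2 s t,
    has_type e1 (Tarr s t) -> has_type e2 s -> has_type (App e1 e2) t
| T_Quote : forall e s, has_type e s -> has_type (Quote e) Tterm.

Definition well_typed (e : tm) : Prop := exists s, has_type e s.

Inductive root_step : tm -> tm -> Prop :=
| R_I : forall s e, root_step (App (I_ s) e) e
| R_K : forall s t e1 e2, root_step (App (App (K_ s t) e1) e2) e1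
| R_S : forall s t u e1 e2 e3,
    root_step (App (App (App (S_ s t u) e1) e2) e3) (App (App e1 e3) (App e2 e3))
| R_value : forall s e, has_type e s -> root_step (App (value_ s) (Quote e)) e
| R_lift : forall e, root_step (App lift (Quote e)) (Quote (Quote e))
| R_app : forall e1 e2, well_typed (App e1 e2) ->
    root_step (App (App app (Quote e1)) (Quote e2)) (Quote (App e1 e2)).

Inductive step : tm -> tm -> Prop :=
| St_root : forall e e', root_step e e' -> step e e'
| St_App1 : forall e1 e1' e2, step e1 e1' -> step (App e1 e2) (App e1' e2)
| St_App2 : forall e1 e2 e2', step e2 e2' -> step (App e1 e2) (App e1 e2')
| St_Quote : forall e e', step e e' -> step (Quote e) (Quote e').

Inductive reduces : tm -> tm -> Prop :=
| Red_refl : forall e, reduces e e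
| Red_step : forall e1 e2 e3, step e1 e2 -> reduces e2 e3 -> reduces e1 e3.

Definition has_infinite_reduction (e : tm) : Prop :=
  exists f : nat -> tm, f 0 = e /\ forall n, step (f n) (f (S n)).


(* With [V] the evaluator at type [term -> term] and [w = S V I], the term
   [w ⌜w⌝] reduces in three steps back to itself:
   [S V I ⌜w⌝ => V ⌜w⌝ (I ⌜w⌝) => V ⌜w⌝ ⌜w⌝ => w ⌜w⌝].
   The evaluation rule for [value] is what plays the role of the self-application
   that is otherwise unavailable in a simply typed system. *)

Lemma infinite_reduction_of_invariant (P : tm -> Prop) (next : tm -> tm) (e : tm) :
  (forall x, P x -> step x (next x) /\ P (next x)) ->
  P e -> has_infinite_reduction e.
Proof.
  intros Hnext He.
  set (f := fun n => Nat.iter n next e).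
  assert (HP : forall n, P (f n)).
  { induction n as [|n IH]; [exact He|]. exact (proj2 (Hnext _ IH)). }
  exists f. split; [reflexivity|].
  intro n. exact (proj1 (Hnext _ (HP n))).
Qed.

Definition eval_term : tm := value_ (Tarr Tterm Tterm).
Definition omega_fun : tm := App (App (S_ Tterm Tterm Tterm) eval_term) (I_ Tterm).
Definition omega : tm := App omega_fun (Quote omega_fun).
Definition omega_1 : tm :=
  App (App eval_term (Quote omega_fun)) (App (I_ Tterm) (Quote omega_fun)).
Definition omega_2 : tm := App (App eval_term (Quote omega_fun)) (Quote omega_fun).

Lemma omega_fun_type : has_type omega_fun (Tarr Tterm Tterm).
Proof. repeat econstructor. Qed.

Lemma omega_type : has_type omega Tterm.
Proof. econstructor; [apply omega_fun_type | econstructor; apply omega_fun_type]. Qed.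

Lemma step_omega : step omega omega_1.
Proof. apply St_root, R_S. Qed.

Lemma step_omega_1 : step omega_1 omega_2.
Proof. apply St_App2, St_root, R_I. Qed.

Lemma step_omega_2 : step omega_2 omega.
Proof. apply St_App1, St_root, R_value, omega_fun_type. Qed.

Definition omega_cycle (x : tm) : Prop := x = omega \/ x = omega_1 \/ x = omega_2.

(* Only its values on the three terms of the cycle matter. *)
Definition omega_next (x : tm) : tm :=
  match x with
  | App (App (value_ _) _) (Quote _) => omega
  | App (App (value_ _) _) _ => omega_2
  | _ => omega_1
  end.

Lemma omega_cycle_step (x : tm) :
  omega_cycle x -> step x (omega_next x) /\ omega_cycle (omega_next x).
Proof.
  intros [-> | [-> | ->]]; cbn; unfold omega_cycle.
  - split; [exact step_omega | auto].
  - split; [exact step_omega_1 | auto].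
  - split; [exact step_omega_2 | auto].
Qed.

Theorem theorem1 : exists e : tm, well_typed e /\ has_infinite_reduction e.
Proof.
  exists omega. split.
  - exists Tterm. exact omega_type.
  - apply (infinite_reduction_of_invariant omega_cycle omega_next);
      [exact omega_cycle_step | now left].
Qed.
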